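(* Let $X$ be a centered Gaussian random vector in a separable Hilbert space $(H,\langle\cdot,\cdot\rangle)$ with ${\mathbb E}\|X\|^2<\infty$ whose covariance operator $C_X y={\mathbb E}(\langle y,X\rangle X)$ has infinitely many nonzero eigenvalues $\lambda_1\ge\lambda_2\ge\dots>0$ with corresponding orthonormal eigenvectors $(u_j)_{j\ge1}$, so that $X=\sum_{j\ge1}\lambda_j^{1/2}Z_ju_j$ with $Z_j:=\langle X,u_j\rangle/\lambda_j^{1/2}$ i.i.d. $N(0,1)$. Let $n\ge1$ and let $m,l,n_1,\dots,n_m\in{\mathbb N}$ with $\prod_{j=1}^m n_j\le n$. For $j=1,\dots,m$ let $Z^{(j)}:=(Z_{(j-1)l+1},\dots,Z_{jl})$, let $\alpha_j\subset{\mathbb R}^l$ be an $L^2$-optimal $n_j$-quantizer for $Z^{(j)}$ (with respect to the Euclidean norm), let $\widehat{Z^{(j)}}=\sum_{b\in\alpha_j}b\,\mathbf 1_{C_b(\alpha_j)}(Z^{(j)})$ be a Voronoi $\alpha_j$-quantization of $Z^{(j)}$, and set \[\hat X^n:=\sum_{j=1}^m\sum_{k=1}^l\lambda^{1/2}_{(j-1)l+k}(\widehat{Z^{(j)}})_k\,u_{(j-1)l+k}.\] Then \[{\mathbb E}\|X-\hat X^n\|^2\le\sum_{j=1}^m\lambda_{(j-1)l+1}\,e_{n_j}(N(0,I_l))^2+\sum_{j\ge ml+1}\lambda_j.\] Moreover, this inequality is an equality if $l=1$ (or if $\lambda_{(j-1)l+1}=\dots=\lambda_{jl}$ for every $j$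).
   Context: For a random vector $Y$ in ${\mathbb R}^d$ (Euclidean norm) or in $H$ with finite second moment, $e_k(Y):=\inf\{({\mathbb E}\min_{a\in\alpha}\|Y-a\|^2)^{1/2}:\mathrm{card}(\alpha)\le k\}$, and $e_k(N(0,I_l))$ denotes this quantity for a standard normal vector in ${\mathbb R}^l$. An $L^2$-optimal $k$-quantizer for $Y$ is a set $\alpha$ with $\mathrm{card}(\alpha)\le k$ attaining this infimum. A Voronoi partition $\{C_b(\alpha):b\in\alpha\}$ is a Borel partition with $C_b(\alpha)\subset\{x:\|x-b\|=\min_{c\in\alpha}\|x-c\|\}$. *)

From HB Require Import structures.
From mathcomp Require Import all_boot all_order all_algebra finmap.
From mathcomp Require Import all_classical all_reals all_analysis.

Set Implicit Arguments.
Unset Strict Implicit.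
Unset Printing Implicit Defensive.

Import Order.TTheory GRing.Theory Num.Theory.
Import numFieldNormedType.Exports.

Local Open Scope classical_set_scope.
Local Open Scope ring_scope.

Definition is_inner_product {R : realType} {H : normedModType R}
    (ip : H -> H -> R) : Prop :=
  [/\ (forall x y, ip x y = ip y x),
      (forall (a : R) x y z, ip (a *: x + y) z = a * ip x z + ip y z) &
      (forall x, ip x x = `|x| ^+ 2)].

Definition separable {R : realType} {H : normedModType R} : Prop :=
  exists S : set H, countable S /\ closure S = setT.

Definition centered_gauss_law {R : realType} (s : R) (A : set R) : \bar R :=
  if s == 0 then \d_(0:R) A else normal_prob 0 s A.

Definition Rl (R : realType) (l : nat) :=
  g_sigma_algebraType (@open 'rV[R]_l).

Definition eucl {R : realType} {l : nat} (x : 'rV[R]_l) : R :=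
  Num.sqrt (\sum_(i < l) x ord0 i ^+ 2).

(* min_{a in alpha} |x - a|^2  (= +oo for empty alpha) *)
Definition mindist2 {R : realType} {l : nat} (alpha : {fset 'rV[R]_l})
    (x : 'rV[R]_l) : \bar R :=
  \big[mine/+oo%E]_(a <- alpha) ((eucl (x - a)) ^+ 2)%:E.

Definition e_rv {R : realType} {d} {Om : measurableType d}
    (P : probability Om R) {l : nat} (Y : Om -> 'rV[R]_l) (k : nat) : \bar R :=
  ereal_inf [set sqrte (\int[P]_w mindist2 alpha (Y w))%E
            | alpha in [set alpha : {fset 'rV[R]_l} | (#|` alpha|%fset <= k)%N]].

Definition e_law {R : realType} {l : nat} (mu : probability (Rl R l) R)
    (k : nat) : \bar R :=
  ereal_inf [set sqrte (\int[mu]_x mindist2 alpha x)%E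
            | alpha in [set alpha : {fset 'rV[R]_l} | (#|` alpha|%fset <= k)%N]].

Definition std_normal_law {R : realType} {l : nat}
    (mu : probability (Rl R l) R) : Prop :=
  forall A : 'I_l -> set R, (forall i, measurable (A i)) ->
    mu [set x : Rl R l | forall i, A i (x ord0 i)]
    = (\prod_(i < l) normal_prob 0 1 (A i))%E.

Definition optimal_quantizer {R : realType} {d} {Om : measurableType d}
    (P : probability Om R) {l : nat} (Y : Om -> 'rV[R]_l) (k : nat)
    (alpha : {fset 'rV[R]_l}) : Prop :=
  (#|` alpha|%fset <= k)%N /\
  sqrte (\int[P]_w mindist2 alpha (Y w))%E = e_rv P Y k.

Definition voronoi_partition {R : realType} {l : nat}
    (alpha : {fset 'rV[R]_l}) (C : 'rV[R]_l -> set (Rl R l)) : Prop :=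
  [/\ (forall b, b \in alpha -> measurable (C b)),
      (forall b c, b \in alpha -> c \in alpha -> b != c -> C b `&` C c = set0),
      (forall x : 'rV[R]_l, exists2 b, b \in alpha & C b x) &
      (forall b, b \in alpha -> forall x, C b x ->
         forall c, c \in alpha -> eucl (x - b) <= eucl (x - c))].

Definition mutually_independent {R : realType} {d} {Om : measurableType d}
    (P : probability Om R) (Z : nat -> Om -> R) : Prop :=
  forall (F : seq nat) (A : nat -> set R), uniq F ->
    (forall i, measurable (A i)) ->
    P (\bigcap_(i in [set i | i \in F]) (Z i @^-1` A i))
    = (\prod_(i <- F) P (Z i @^-1` A i))%E.

From HB Require Import structures.
From mathcomp Require Import all_boot all_order all_algebra finmap.
From mathcomp Require Import all_classical all_reals all_analysis.
From mathcomp Require Import measurable_realfun lra.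
Import Order.TTheory GRing.Theory Num.Theory.
Import numFieldNormedType.Exports.
Local Open Scope classical_set_scope.
Local Open Scope ring_scope.
Set Implicit Arguments.
Unset Strict Implicit.
Unset Printing Implicit Defensive.

(* Parseval's identity for the orthonormal family (u_j) splits E||X - X^n||^2
   into the tail sum of the lambda_j beyond the m blocks of quantized
   coordinates, plus, for each block j, the weighted error
   sum_k lambda_(jl+k) E (Z^(j)_k - hat Z^(j)_k)^2.  As the lambda_j are
   nonincreasing, this is at most lambda_(jl) E|Z^(j) - hat Z^(j)|^2, with
   equality when the eigenvalues are constant on the block.  For a Voronoi
   quantization E|Z^(j) - hat Z^(j)|^2 = E min_(a in alpha_j) |Z^(j) - a|^2,
   which is e_(n_j)(Z^(j))^2 by optimality, and by independence Z^(j) has law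
   N(0, I_l).  Since X is only weakly measurable, ||X - X^n||^2 is integrated
   through the almost everywhere equal series of its squared coordinates. *)

Section row_boxes.
Variables (R : realType) (l : nat).

Definition box (A : 'I_l -> set R) : set (Rl R l) := [set x | forall i, A i (x ord0 i)].

Definition boxes : set (set (Rl R l)) :=
  [set B | exists2 A : 'I_l -> set R, (forall i, measurable (A i)) & B = box A].

Lemma measurable_coord i : measurable_fun setT (fun x : Rl R l => x ord0 i).
Proof.
apply: (measurability _ (RGenOpens.measurableE R)) => _ [_ [a [b ->]] <-].
rewrite setTI; apply: sub_sigma_algebra.
apply: (continuousP _).1; first exact: coord_continuous.
exact: interval_open.
Qed.

Lemma box_bigcap A :
  box A = \bigcap_(i in [set: 'I_l]) ((fun x : Rl R l => x ord0 i) @^-1` A i).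
Proof. by apply/seteqP; split => x /= Ax i; [move=> _|]; apply: Ax. Qed.

Lemma measurable_box A : (forall i, measurable (A i)) -> measurable (box A).
Proof.
move=> mA; rewrite box_bigcap; apply: fin_bigcap_measurable => [|i _].
  exact: finite_finset.
by rewrite -[_ @^-1` _]setTI; apply: measurable_coord.
Qed.

Lemma boxes_measurable : boxes `<=` measurable.
Proof. by move=> _ [A mA ->]; apply: measurable_box. Qed.

Lemma setI_box A B : box A `&` box B = box (fun i => A i `&` B i).
Proof. by apply/seteqP; split => x /= => [[Ax Bx] i|ABx]; [|split => i; case: (ABx i)]. Qed.

Definition rat_box (p : 'rV[rat]_l * 'rV[rat]_l) : set (Rl R l) :=
  box (fun i => `](ratr (p.1 ord0 i) : R), ratr (p.2 ord0 i)[%classic).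

Lemma open_rat_box (U : set 'rV[R]_l) x :
  open U -> U x -> exists2 p, rat_box p x & rat_box p `<=` U.
Proof.
move=> oU Ux.
have /nbhs_ballP [e e0 xeU] : nbhs x U by move: oU; rewrite openE => /(_ x Ux).
have near_rat i : exists q : rat * rat,
    (x ord0 i - e < ratr q.1 < x ord0 i) && (x ord0 i < ratr q.2 < x ord0 i + e).
  have [q1 q1x] : exists q, (ratr q : R) \in `](x ord0 i - e), (x ord0 i)[.
    by apply: rat_in_itvoo; rewrite ltrBlDr ltrDl.
  have [q2 q2x] : exists q, (ratr q : R) \in `](x ord0 i), (x ord0 i + e)[.
    by apply: rat_in_itvoo; rewrite ltrDl.
  by exists (q1, q2); rewrite !in_itv /= in q1x q2x; rewrite q1x q2x.
have [q xq] := choice near_rat.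
exists (\row_i (q i).1, \row_i (q i).2) => [j|y py].
  by have /andP[/andP[_ ?] /andP[? _]] := xq j; rewrite /= !mxE in_itv /=; apply/andP.
apply: xeU; split => // i0 j; rewrite (ord1 i0).
have /andP[/andP[? ?] /andP[? ?]] := xq j.
move: (py j); rewrite /= !mxE in_itv /= => /andP[? ?].
by rewrite /ball /= ltr_norml; apply/andP; split; lra.
Qed.

Lemma open_sigma_boxes (U : set 'rV[R]_l) : open U -> <<s boxes >> U.
Proof.
move=> oU; pose F p := if pselect (rat_box p `<=` U) is left _ then rat_box p else set0.
have -> : U = \bigcup_p F p.
  apply/seteqP; split => [x Ux|x [p _]]; last first.
    by rewrite /F; case: pselect => // sub /sub.
  have [p px pU] := open_rat_box oU Ux.
  by exists p => //; rewrite /F; case: pselect.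
apply: (@countable_bigcupT_measurable _ (g_sigma_algebraType boxes) _ F).
  exact: countableP.
move=> p; rewrite /F; case: pselect => _; last exact: measurable0.
by apply: sub_sigma_algebra; eexists; last reflexivity; move=> i; apply: measurable_itv.
Qed.

Lemma measurable_RlE : @measurable _ (Rl R l) = <<s boxes >>.
Proof.
apply/seteqP; split; apply: smallest_sub.
- exact: smallest_sigma_algebra.
- exact: open_sigma_boxes.
- exact: sigma_algebra_measurable.
- exact: boxes_measurable.
Qed.

Lemma eq_probability_boxes (mu1 mu2 : probability (Rl R l) R) :
  (forall A, (forall i, measurable (A i)) -> mu1 (box A) = mu2 (box A)) ->
  forall E, measurable E -> mu1 E = mu2 E.
Proof.
move=> mu12 E mE.
apply: (@g_sigma_algebra_measure_unique _ R _ boxes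
  boxes_measurable (fun _ => setT)).
- by move=> _; exists (fun _ => setT) => //; apply/seteqP; split.
- by apply/seteqP; split => // x _; exists 0%N.
- move=> _ _ [A mA ->] [B mB ->]; rewrite setI_box.
  by eexists; last reflexivity; move=> i; apply: measurableI.
- by move=> _ [A mA ->]; apply: mu12.
- by move=> _; apply: (le_lt_trans (probability_le1 _ measurableT)); exact: ltey.
- by rewrite -measurable_RlE.
Qed.

Lemma measurable_row_fun d (T : measurableType d) (Y : T -> 'rV[R]_l) :
  (forall i, measurable_fun setT (fun w => Y w ord0 i)) ->
  measurable_fun setT (Y : T -> Rl R l).
Proof.
move=> mY; apply: (measurability _ measurable_RlE) => _ [_ [A mA ->] <-].
rewrite box_bigcap preimage_bigcap setTI.
apply: fin_bigcap_measurable => [|i _]; first exact: finite_finset.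
by rewrite -[_ @^-1` _]setTI; apply: mY.
Qed.

End row_boxes.

Section voronoi_quantization.
Variables (R : realType) (l : nat).
Implicit Types (alpha : {fset 'rV[R]_l}) (C : 'rV[R]_l -> set (Rl R l)).

Lemma sqr_eucl (x : 'rV[R]_l) : eucl x ^+ 2 = \sum_(i < l) x ord0 i ^+ 2.
Proof. by rewrite sqr_sqrtr // sumr_ge0 // => i _; apply: sqr_ge0. Qed.

Lemma mindist2_ge0 alpha x : (0 <= mindist2 alpha x)%E.
Proof. by apply: le_bigmin => [|a _]; rewrite ?leey // lee_fin sqr_ge0. Qed.

Lemma measurable_mindist2 alpha : measurable_fun setT (mindist2 alpha : Rl R l -> _).
Proof.
rewrite /mindist2; elim: (alpha : seq _) => [|a s IH].
  by under eq_fun do rewrite big_nil; exact: measurable_cst.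
under eq_fun do rewrite big_cons.
apply: measurable_mine => //; apply/measurable_EFinP.
under eq_fun do rewrite sqr_eucl.
apply: measurable_sum => i; apply: measurable_funX.
under eq_fun do rewrite !mxE.
by apply: measurable_funB; [exact: measurable_coord|exact: measurable_cst].
Qed.

Definition voronoi_quantization alpha C (x : 'rV[R]_l) : 'rV[R]_l :=
  \sum_(b <- alpha) \1_(C b) (x : Rl R l) *: b.

Lemma voronoi_quantization_cell alpha C x b :
  voronoi_partition alpha C -> b \in alpha -> C b x ->
  voronoi_quantization alpha C x = b.
Proof.
move=> [_ disjC _ _] ba Cbx.
rewrite /voronoi_quantization (bigD1_seq b) //= indicE mem_set // scale1r.
rewrite big_seq_cond big1 ?addr0 // => c /andP [ca cb]; rewrite indicE.
have [/set_mem Ccx|] := boolP (x \in C c); last by rewrite scale0r.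
by have : (C c `&` C b) x by []; rewrite disjC.
Qed.

Lemma mindist2_voronoi alpha C x : voronoi_partition alpha C ->
  mindist2 alpha x = (eucl (x - voronoi_quantization alpha C x) ^+ 2)%:E.
Proof.
move=> vorC; have [_ _ coverC nearC] := vorC.
have [b ba Cbx] := coverC x.
rewrite (voronoi_quantization_cell vorC ba Cbx).
apply/eqP; rewrite eq_le; apply/andP; split; first by rewrite /mindist2; apply: ge_bigmin_seq.
rewrite /mindist2 big_seq; apply: le_bigmin => [|c ca]; rewrite ?leey // lee_fin.
by apply: lerXn2r; rewrite ?nnegrE ?sqrtr_ge0 //; exact: nearC.
Qed.

Lemma measurable_voronoi_quantization alpha C (k : 'I_l) :
  (forall b, b \in alpha -> measurable (C b)) ->
  measurable_fun setT (fun x : Rl R l => voronoi_quantization alpha C x ord0 k).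
Proof.
move=> mC; under eq_fun do rewrite summxE big_seq big_mkcond.
apply: measurable_sum => b; case: (boolP (b \in alpha)) => ba /=.
  under eq_fun do rewrite mxE.
  by apply: measurable_funM; [exact: measurable_indic (mC b ba)|exact: measurable_cst].
exact: measurable_cst.
Qed.

End voronoi_quantization.

Section quantization_error.
Variables (R : realType) (d : measure_display) (Om : measurableType d).
Variables (P : probability Om R) (l : nat).

Lemma integral_mindist2_law (Y : Om -> 'rV[R]_l) (gam : probability (Rl R l) R)
    alpha :
  (forall i, measurable_fun setT (fun w => Y w ord0 i)) ->
  (forall A, (forall i, measurable (A i)) -> P ((Y : Om -> Rl R l) @^-1` box A) = gam (box A)) ->
  (\int[P]_w mindist2 alpha (Y w) = \int[gam]_x mindist2 alpha x)%E.
Proof.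
move=> mY lawY.
pose Yrv : {RV P >-> Rl R l} :=
  HB.pack (Y : Om -> Rl R l) (isMeasurableFun.Build _ _ _ _ _ (measurable_row_fun mY)).
rewrite (@eq_measure_integral _ _ _ setT (distribution P Yrv) gam); last first.
  by move=> E mE _; apply: eq_probability_boxes => // A mA; rewrite -lawY.
rewrite ge0_integral_distribution //; first exact: measurable_mindist2.
exact: mindist2_ge0.
Qed.

Lemma e_rv_law (Y : Om -> 'rV[R]_l) (gam : probability (Rl R l) R) k :
  (forall i, measurable_fun setT (fun w => Y w ord0 i)) ->
  (forall A, (forall i, measurable (A i)) -> P ((Y : Om -> Rl R l) @^-1` box A) = gam (box A)) ->
  e_rv P Y k = e_law gam k.
Proof.
move=> mY lawY; rewrite /e_rv /e_law; congr ereal_inf.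
by apply/seteqP; split => _ [alpha Ha <-]; exists alpha;
  rewrite ?(integral_mindist2_law _ mY lawY).
Qed.

Lemma integral_mindist2_optimal (Y : Om -> 'rV[R]_l) k alpha :
  optimal_quantizer P Y k alpha ->
  (\int[P]_w mindist2 alpha (Y w) = e_rv P Y k * e_rv P Y k)%E.
Proof.
move=> [_ <-]; rewrite -[LHS]sqr_sqrte //.
by apply: integral_ge0 => w _; exact: mindist2_ge0.
Qed.

Lemma row_independent_std_normal (Z : nat -> Om -> R) (f : 'I_l -> nat)
    (gam : probability (Rl R l) R) :
  mutually_independent P Z ->
  (forall j A, measurable A -> P (Z j @^-1` A) = normal_prob 0 1 A) ->
  injective f -> std_normal_law gam ->
  forall A, (forall i, measurable (A i)) ->
  P ((fun w => \row_k Z (f k) w : Rl R l) @^-1` box A) = gam (box A).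
Proof.
move=> indepZ lawZ injf stdgam A mA; rewrite [RHS]stdgam //.
pose A' j := if [pick k | f k == j] is Some k then A k else setT.
have A'E k : A' (f k) = A k.
  rewrite /A'; case: pickP => [k' /eqP/injf -> //|/(_ k)]; by rewrite eqxx.
have -> : (fun w => \row_k Z (f k) w : Rl R l) @^-1` box A =
    \bigcap_(j in [set j | j \in map f (index_enum 'I_l)]) (Z j @^-1` A' j).
  apply/seteqP; split => w /= Aw.
    by move=> _ /mapP [k _ ->]; rewrite /= A'E; move: (Aw k); rewrite mxE.
  move=> k; rewrite mxE -A'E; apply: Aw; exact: map_f (mem_index_enum k).
rewrite indepZ ?map_inj_uniq ?index_enum_uniq //; last first.
  by move=> j; rewrite /A'; case: pickP => [k _|_]; [exact: mA|exact: measurableT].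
rewrite big_map; apply: eq_bigr => k _.
by rewrite A'E lawZ.
Qed.

End quantization_error.

Section nonmeasurable_integral.
Variables (d : measure_display) (T : measurableType d) (R : realType).
Variable mu : {measure set T -> \bar R}.
Local Open Scope ereal_scope.

Lemma ge0_le_integral_nonmeasurable (f1 f2 : T -> \bar R) :
  (forall x, 0 <= f1 x) -> (forall x, f1 x <= f2 x) ->
  \int[mu]_x f1 x <= \int[mu]_x f2 x.
Proof.
move=> f10 f12; have f20 x : 0 <= f2 x by apply: le_trans (f12 x).
rewrite !ge0_integralE //; apply: ereal_sup_le => _ [h hf1 <-]; exists h => //.
by move=> x; apply: le_trans (hf1 x) _; rewrite /patch; case: ifP.
Qed.

(* [f] need not be measurable: it is squeezed between two measurable functions
   that agree with [g] almost everywhere. *)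
Lemma ge0_ae_eq_integral_nonmeasurable (f g : T -> \bar R) (N : set T) :
  measurable N -> mu N = 0 -> (forall x, ~ N x -> f x = g x) ->
  measurable_fun setT g -> (forall x, 0 <= f x) -> (forall x, 0 <= g x) ->
  \int[mu]_x f x = \int[mu]_x g x.
Proof.
move=> mN N0 fg mg f0 g0.
pose g1 x := g x * (\1_(~` N) x)%:E.
pose g2 x := g x + (\1_N x)%:E * +oo.
have ae_g (h : T -> \bar R) : measurable_fun setT h -> (forall x, 0 <= h x) ->
    (forall x, ~ N x -> g x = h x) -> \int[mu]_x g x = \int[mu]_x h x.
  move=> mh h0 gh; apply: ge0_ae_eq_integral => //; exists N; split => // x /= gNh.
  by apply: contrapT => Nx; apply: gNh => _; exact: gh.
apply/eqP; rewrite eq_le; apply/andP; split.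
  rewrite (ae_g g2); first apply: ge0_le_integral_nonmeasurable => // x.
  - rewrite /g2 indicE; have [Nx|Nx] := pselect (N x).
      by rewrite mem_set // mul1e addey ?leey // gt_eqF // (lt_le_trans _ (g0 x)) ?ltNy0.
    by rewrite memNset // mul0e adde0 fg.
  - apply: emeasurable_funD => //; apply: emeasurable_funM; last exact: measurable_cst.
    by apply/measurable_EFinP; exact: measurable_indic.
  - by move=> x; rewrite adde_ge0 // mule_ge0 // lee_fin.
  - by move=> x Nx; rewrite /g2 indicE memNset // mul0e adde0.
rewrite (ae_g g1); first apply: ge0_le_integral_nonmeasurable => // x.
- by rewrite /g1 mule_ge0 // lee_fin.
- rewrite /g1 indicE; have [Nx|Nx] := pselect (N x).
    by rewrite memNset ?mule0.
  by rewrite mem_set // mule1 fg.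
- apply: emeasurable_funM => //; apply/measurable_EFinP.
  by apply: measurable_indic; exact: measurableC.
- by move=> x; rewrite mule_ge0 // lee_fin.
- by move=> x Nx; rewrite /g1 indicE mem_set // mule1.
Qed.

End nonmeasurable_integral.

Section inner_product.
Variables (R : realType) (H : normedModType R) (ip : H -> H -> R).
Hypothesis hip : is_inner_product ip.

Lemma ipC x y : ip x y = ip y x. Proof. by case: hip. Qed.

Lemma ipxx x : ip x x = `|x| ^+ 2. Proof. by case: hip. Qed.

Lemma ip0l z : ip 0 z = 0.
Proof.
case: hip => _ lin _; have := lin 1 0 0 z.
by rewrite scaler0 addr0 mul1r => h; lra.
Qed.

Lemma ipZl a x z : ip (a *: x) z = a * ip x z.
Proof. by case: hip => _ lin _; rewrite -[a *: x]addr0 lin ip0l addr0. Qed.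

Lemma ipDl x y z : ip (x + y) z = ip x z + ip y z.
Proof. by case: hip => _ lin _; have := lin 1 x y z; rewrite scale1r mul1r. Qed.

Lemma ip_suml I (s : seq I) (F : I -> H) z :
  ip (\sum_(i <- s) F i) z = \sum_(i <- s) ip (F i) z.
Proof. by elim: s => [|a s IH]; rewrite ?big_nil ?ip0l // !big_cons ipDl IH. Qed.

Variable u : nat -> H.
Hypothesis u_orthonormal : forall i j, ip (u i) (u j) = (i == j)%:R.

Lemma norm_sum_orthonormal (a : nat -> R) N :
  `|\sum_(i < N) a i *: u i| ^+ 2 = \sum_(i < N) a i ^+ 2.
Proof.
rewrite -ipxx ip_suml; apply: eq_bigr => i _.
rewrite ipZl ipC ip_suml (bigD1 i) //= big1 => [|j ji].
  by rewrite ipZl u_orthonormal eqxx mulr1 addr0 expr2.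
by rewrite ipZl u_orthonormal val_eqE (negbTE ji) mulr0.
Qed.

Lemma sqr_norm_sub_span (x : H) (c b : nat -> R) N :
  (fun M => \sum_(i < M) c i *: u i) @ \oo --> x ->
  ((`|x - \sum_(i < N) b i *: u i| ^+ 2)%:E =
   \sum_(i <oo) ((c i - (if (i < N)%N then b i else 0)) ^+ 2)%:E)%E.
Proof.
move=> cvg_x; apply/esym/cvg_lim => //; apply/fine_cvgP.
split; first by apply: nearW => M; rewrite sumEFin.
have : (fun M => `|\sum_(i < M) c i *: u i - \sum_(i < N) b i *: u i| ^+ 2) @ \oo -->
    `|x - \sum_(i < N) b i *: u i| ^+ 2.
  under eq_fun do rewrite expr2; rewrite expr2.
  by apply: cvgM; apply: cvg_norm; apply: cvgB => //; exact: cvg_cst.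
apply: cvg_trans; apply: near_eq_cvg; near=> M.
have NM : (N <= M)%N by near: M; exists N.
rewrite /= sumEFin /= big_mkord.
rewrite -(norm_sum_orthonormal (fun i => c i - (if (i < N)%N then b i else 0))).
rewrite (big_ord_widen M (fun i => b i *: u i) NM) [X in _ - X]big_mkcond -sumrB.
by congr (`|_| ^+ 2); apply: eq_bigr => i _; rewrite scalerBl; case: ifP; rewrite ?scale0r.
Unshelve. all: by end_near.
Qed.

End inner_product.

Section karhunen_loeve_error.
Variables (R : realType) (d : measure_display) (Om : measurableType d).
Variable mu : {measure set Om -> \bar R}.
Variables (H : normedModType R) (ip : H -> H -> R) (X : Om -> H).
Variables (u : nat -> H) (lam : nat -> R).
Hypothesis hip : is_inner_product ip.
Hypothesis u_orthonormal : forall i j, ip (u i) (u j) = (i == j)%:R.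
Hypothesis measurable_coord : forall j, measurable_fun setT (fun w => ip (X w) (u j)).
Hypothesis integral_sqr_coord :
  forall j, (\int[mu]_w (ip (X w) (u j) ^+ 2)%:E = (lam j)%:E)%E.
Hypothesis expansion :
  {ae mu, forall w, (fun N => \sum_(j < N) ip (X w) (u j) *: u j) @ \oo --> X w}.

Lemma integral_sqr_norm_sub_span (b : nat -> Om -> R) N :
  (forall i, (i < N)%N -> measurable_fun setT (b i)) ->
  (\int[mu]_w (`|X w - \sum_(i < N) b i w *: u i| ^+ 2)%:E =
   \sum_(i < N) \int[mu]_w ((ip (X w) (u i) - b i w) ^+ 2)%:E
   + \sum_(N <= i <oo) (lam i)%:E)%E.
Proof.
move=> mb; pose e i w := ip (X w) (u i) - (if (i < N)%N then b i w else 0).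
have me i : measurable_fun setT (fun w => e i w ^+ 2).
  apply: measurable_funX; rewrite /e; case: ltnP => iN.
    by apply: measurable_funB; [exact: measurable_coord|exact: mb].
  by under eq_fun do rewrite subr0; exact: measurable_coord.
have e0 i w : (0 <= (e i w ^+ 2)%:E)%E by rewrite lee_fin sqr_ge0.
have [Nb [mNb Nb0 subNb]] := expansion.
rewrite (@ge0_ae_eq_integral_nonmeasurable _ _ _ mu _
  (fun w => \sum_(i <oo) (e i w ^+ 2)%:E)%E Nb) //; last 3 first.
- move=> w Nw; apply: (sqr_norm_sub_span hip u_orthonormal).
  by apply: contrapT => ncvg; apply: Nw; apply: subNb.
- apply: (ge0_emeasurable_sum (P := xpredT)) => // i _.
  exact/measurable_EFinP.
- by move=> w; apply: nneseries_ge0.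
rewrite integral_nneseries //; last by move=> i; exact/measurable_EFinP.
rewrite (nneseries_split 0 N) ?add0n ?big_mkord; last by move=> i _; apply: integral_ge0.
congr (_ + _)%E.
  by apply: eq_bigr => i _; apply: eq_integral => w _; rewrite /e ltn_ord.
apply/congr_lim/funext => M; apply: eq_big_nat => i /andP [iN _].
by rewrite -integral_sqr_coord; apply: eq_integral => w _; rewrite /e ltnNge iN subr0.
Qed.

End karhunen_loeve_error.

Lemma big_ord_mul (T : Type) (idx : T) (op : Monoid.com_law idx) m l (F : nat -> T) :
  \big[op/idx]_(i < m * l) F i = \big[op/idx]_(j < m) \big[op/idx]_(k < l) F (j * l + k)%N.
Proof.
elim: m => [|m IH]; first by rewrite mul0n !big_ord0.
by rewrite mulSnr big_split_ord /= IH big_ord_recr.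
Qed.

(* The sum has at most one term; it avoids casting [i %% l] into ['I_l], which
   is empty when [l = 0]. *)
Definition concat_rows (V : nmodType) l (f : nat -> 'rV[V]_l) (i : nat) : V :=
  \sum_(k < l | val k == (i %% l)%N) f (i %/ l)%N ord0 k.

Lemma concat_rowsE (V : nmodType) l (f : nat -> 'rV[V]_l) j (k : 'I_l) :
  concat_rows f (j * l + k) = f j ord0 k.
Proof.
have l_gt0 : (0 < l)%N by apply: leq_ltn_trans (ltn_ord k).
rewrite /concat_rows modnMDl modn_small // divnMDl // divn_small // addn0.
by rewrite (big_pred1 k).
Qed.

Section product_quantization.
Variables (R : realType) (d : measure_display) (Om : measurableType d).
Variables (P : probability Om R) (H : normedModType R) (ip : H -> H -> R).
Variables (X : Om -> H) (lam : nat -> R) (u : nat -> H) (m l : nat).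
Variables (nn : nat -> nat) (alpha : nat -> {fset 'rV[R]_l}).
Variables (C : nat -> 'rV[R]_l -> set (Rl R l)) (gam : probability (Rl R l) R).
Hypothesis hip : is_inner_product ip.
Hypothesis measurable_ipX : forall y, measurable_fun setT (fun w => ip y (X w)).
Hypothesis lam_gt0 : forall j, 0 < lam j.
Hypothesis lam_noninc : forall j, lam j.+1 <= lam j.
Hypothesis u_orthonormal : forall i j, ip (u i) (u j) = (i == j)%:R.
Hypothesis covariance_u : forall j y,
  (\int[P]_w (ip (u j) (X w) * ip y (X w))%:E = (lam j * ip y (u j))%:E)%E.

Definition std_coord j w := ip (X w) (u j) / Num.sqrt (lam j).

Definition std_block j w : 'rV[R]_l := \row_(k < l) std_coord (j * l + k) w.

Definition quantized_block j w := voronoi_quantization (alpha j) (C j) (std_block j w).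

Definition quantized_X w := \sum_(j < m) \sum_(k < l)
  (Num.sqrt (lam (j * l + k)) * quantized_block j w ord0 k) *: u (j * l + k).

Hypothesis std_coord_indep : mutually_independent P std_coord.
Hypothesis std_coord_law :
  forall j A, measurable A -> P (std_coord j @^-1` A) = normal_prob 0 1 A.
Hypothesis expansion : {ae P, forall w,
  (fun N => \sum_(j < N) (Num.sqrt (lam j) * std_coord j w) *: u j) @ \oo --> X w}.
Hypothesis alpha_optimal :
  forall j, (j < m)%N -> optimal_quantizer P (std_block j) (nn j) (alpha j).
Hypothesis C_voronoi : forall j, (j < m)%N -> voronoi_partition (alpha j) (C j).
Hypothesis gam_std : std_normal_law gam.

Lemma sqrt_lam_std_coord j w : Num.sqrt (lam j) * std_coord j w = ip (X w) (u j).
Proof. by rewrite mulrC divfK // gt_eqF // sqrtr_gt0. Qed.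

Lemma lam_le a b : (a <= b)%N -> lam b <= lam a.
Proof.
apply: (@homo_leq _ lam (fun x y => y <= x)) => [x|y x z yx zy|//].
  exact: lexx.
exact: le_trans zy yx.
Qed.

Lemma measurable_std_block j (k : 'I_l) :
  measurable_fun setT (fun w => std_block j w ord0 k).
Proof.
under eq_fun do rewrite mxE.
apply: measurable_funM; last exact: measurable_cst.
by under eq_fun do rewrite (ipC hip); exact: measurable_ipX.
Qed.

Lemma measurable_quantized_block j (k : 'I_l) : (j < m)%N ->
  measurable_fun setT (fun w => quantized_block j w ord0 k).
Proof.
move=> jm; have [mC _ _ _] := C_voronoi jm.
apply: (measurableT_comp (measurable_voronoi_quantization k mC)).
exact/measurable_row_fun/measurable_std_block.
Qed.

Lemma measurable_block_sqr_error j (k : 'I_l) : (j < m)%N ->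
  measurable_fun setT
    (fun w => (std_block j w ord0 k - quantized_block j w ord0 k) ^+ 2).
Proof.
move=> jm; apply: measurable_funX.
by apply: measurable_funB; [exact: measurable_std_block|exact: measurable_quantized_block].
Qed.

Lemma integral_sqr_norm_sub_quantized_X :
  (\int[P]_w (`|X w - quantized_X w| ^+ 2)%:E =
   \sum_(j < m) \int[P]_w (\sum_(k < l)
      lam (j * l + k) * (std_block j w ord0 k - quantized_block j w ord0 k) ^+ 2)%:E
   + \sum_(m * l <= i <oo) (lam i)%:E)%E.
Proof.
pose b i w := Num.sqrt (lam i) * concat_rows (quantized_block ^~ w) i.
have b_block j (k : 'I_l) w :
    (ip (X w) (u (j * l + k)) - b (j * l + k)%N w) ^+ 2 =
    lam (j * l + k) * (std_block j w ord0 k - quantized_block j w ord0 k) ^+ 2.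
  rewrite /b concat_rowsE -sqrt_lam_std_coord mxE -mulrBr exprMn sqr_sqrtr //.
  exact: ltW.
have -> : quantized_X = fun w => \sum_(i < m * l) b i w *: u i.
  apply/funext => w; rewrite (big_ord_mul _ m l (fun i => b i w *: u i)).
  by apply: eq_bigr => j _; apply: eq_bigr => k _; rewrite /b concat_rowsE.
rewrite (@integral_sqr_norm_sub_span _ _ _ P _ _ _ _ lam hip u_orthonormal) //.
- congr (_ + _)%E.
  rewrite (big_ord_mul _ m l (fun i => \int[P]_w ((ip (X w) (u i) - b i w) ^+ 2)%:E)%E).
  apply: eq_bigr => j _; rewrite -ge0_integral_sum //; last 2 first.
  + move=> k; apply/measurable_EFinP; under eq_fun do rewrite b_block.
    by apply: measurable_funM; [exact: measurable_cst|exact: measurable_block_sqr_error].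
  + by move=> k w _; rewrite lee_fin sqr_ge0.
  apply: eq_integral => w _; rewrite sumEFin.
  by congr EFin; apply: eq_bigr => k _; rewrite b_block.
- move=> j; under eq_fun do rewrite (ipC hip); exact: measurable_ipX.
- move=> j; have := covariance_u j (u j); rewrite u_orthonormal eqxx mulr1 => <-.
  by apply: eq_integral => w _; rewrite expr2 (ipC hip).
- apply: filterS expansion => w.
  by under eq_fun do under eq_bigr do rewrite sqrt_lam_std_coord.
- move=> i iml; apply: measurable_funM; first exact: measurable_cst.
  have l_gt0 : (0 < l)%N by move: iml; case: (l) => //; rewrite muln0.
  rewrite /concat_rows; under eq_fun do rewrite -big_filter.
  by apply: measurable_sum => k; apply: measurable_quantized_block; rewrite ltn_divLR.
Qed.

Lemma std_block_law j A : (forall i, measurable (A i)) ->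
  P ((std_block j : Om -> Rl R l) @^-1` box A) = gam (box A).
Proof.
apply: row_independent_std_normal => // k k' /addnI.
exact: val_inj.
Qed.

Lemma quantization_error_block j : (j < m)%N ->
  ((lam (j * l))%:E * (e_law gam (nn j) * e_law gam (nn j)) =
   \int[P]_w (lam (j * l) *
     \sum_(k < l) (std_block j w ord0 k - quantized_block j w ord0 k) ^+ 2)%:E)%E.
Proof.
move=> jm.
have mblock := measurable_row_fun (measurable_std_block j).
rewrite -(e_rv_law _ (measurable_std_block j) (@std_block_law j)).
rewrite -(integral_mindist2_optimal (alpha_optimal jm)) -ge0_integralZl //; last 3 first.
- exact: measurableT_comp (measurable_mindist2 _) mblock.
- by move=> w _; exact: mindist2_ge0.
- by rewrite lee_fin ltW.
apply: eq_integral => w _; rewrite (mindist2_voronoi _ (C_voronoi jm)) sqr_eucl EFinM.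
by congr (_ * _%:E)%E; apply: eq_bigr => k _; rewrite !mxE.
Qed.

Theorem quantized_karhunen_loeve_error :
  let err := (\int[P]_w (`|X w - quantized_X w| ^+ 2)%:E)%E in
  let bound := (\sum_(j < m) ((lam (j * l)%N)%:E * (e_law gam (nn j) * e_law gam (nn j)))
                + \sum_(m * l <= j <oo) (lam j)%:E)%E in
  (err <= bound)%E /\
  ((l = 1%N \/ (forall j k, (j < m)%N -> (k < l)%N -> lam (j * l + k)%N = lam (j * l)%N))
     -> err = bound).
Proof.
rewrite /= integral_sqr_norm_sub_quantized_X; split=> [|lam_block].
  apply: leeD2r; apply: lee_sum => j _; rewrite quantization_error_block //.
  have mt k := measurable_block_sqr_error k (ltn_ord j).
  apply: ge0_le_integral => //.
  - by move=> w _; rewrite lee_fin sumr_ge0 // => k _; rewrite mulr_ge0 ?sqr_ge0 // ltW.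
  - apply/measurable_EFinP; apply: measurable_sum => k.
    by apply: measurable_funM; [exact: measurable_cst|exact: mt].
  - apply/measurable_EFinP; apply: measurable_funM; first exact: measurable_cst.
    by apply: measurable_sum => k; exact: mt.
  move=> w _; rewrite lee_fin mulr_sumr ler_sum // => k _.
  by rewrite ler_wpM2r ?sqr_ge0 ?lam_le ?leq_addr.
have lam_blockE j k : (j < m)%N -> (k < l)%N -> lam (j * l + k) = lam (j * l).
  case: lam_block => [l1 _|]; last exact.
  by rewrite l1 ltnS leqn0 => /eqP ->; rewrite addn0.
congr (_ + _)%E; apply: eq_bigr => j _; rewrite quantization_error_block //.
apply: eq_integral => w _; rewrite mulr_sumr; congr EFin; apply: eq_bigr => k _.
by rewrite lam_blockE.
Qed.

End product_quantization.

Unset Implicit Arguments.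
Set Strict Implicit.

Theorem lemma1 (R : realType) (d : measure_display) (Om : measurableType d)
  (P : probability Om R)
  (H : completeNormedModType R) (ip : H -> H -> R)
  (X : Om -> H) (lam : nat -> R) (u : nat -> H)
  (n m l : nat) (nn : nat -> nat)
  (alpha : nat -> {fset 'rV[R]_l}) (C : nat -> 'rV[R]_l -> set (Rl R l))
  (gam : probability (Rl R l) R) :
  (* H is a separable (real) Hilbert space *)
  is_inner_product ip -> @separable R H ->
  (* X is a (weakly measurable) random vector, centered Gaussian *)
  (forall y, measurable_fun setT (fun w => ip y (X w))) ->
  (forall y, exists2 s : R, 0 <= s &
     forall A : set R, measurable A ->
       P [set w | A (ip y (X w))] = centered_gauss_law s A) ->
  (* E ||X||^2 < oo *)
  (\int[P]_w (`|X w| ^+ 2)%:E < +oo)%E ->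
  (* lam_0 >= lam_1 >= ... > 0 are the nonzero eigenvalues of C_X, with
     orthonormal eigenvectors u_j (weak form of C_X u_j = lam_j u_j) *)
  (forall j, 0 < lam j) -> (forall j, lam j.+1 <= lam j) ->
  (forall i j, ip (u i) (u j) = (i == j)%:R) ->
  (forall j y, (\int[P]_w (ip (u j) (X w) * ip y (X w))%:E)%E
               = (lam j * ip y (u j))%:E) ->
  (* no other nonzero eigenvalue: C_X vanishes on the orthogonal of the u_j *)
  (forall y, (forall j, ip y (u j) = 0) ->
     forall z, (\int[P]_w (ip y (X w) * ip z (X w))%:E)%E = 0%E) ->
  (* Karhunen-Loeve: Z_j := <X,u_j>/lam_j^(1/2) i.i.d. N(0,1) and
     X = sum_j lam_j^(1/2) Z_j u_j *)
  let Z := fun j w => ip (X w) (u j) / Num.sqrt (lam j) in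
  mutually_independent P Z ->
  (forall j A, measurable A -> P (Z j @^-1` A) = normal_prob 0 1 A) ->
  {ae P, forall w,
     (fun N => \sum_(j < N) (Num.sqrt (lam j) * Z j w) *: u j) @ \oo --> X w} ->
  (* quantization data *)
  (1 <= n)%N -> (\prod_(j < m) nn j <= n)%N ->
  let Zb := fun j w => \row_(k < l) Z (j * l + k)%N w in
  (forall j, (j < m)%N -> optimal_quantizer P (Zb j) (nn j) (alpha j)) ->
  (forall j, (j < m)%N -> voronoi_partition (alpha j) (C j)) ->
  let Zhat := fun j w => \sum_(b <- alpha j) (\1_(C j b) (Zb j w : Rl R l)) *: b in
  let Xhat := fun w => \sum_(j < m) \sum_(k < l)
        (Num.sqrt (lam (j * l + k)%N) * Zhat j w ord0 k) *: u (j * l + k)%N in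
  (* N(0, I_l) *)
  std_normal_law gam ->
  let err := (\int[P]_w (`|X w - Xhat w| ^+ 2)%:E)%E in
  let bound := (\sum_(j < m) ((lam (j * l)%N)%:E * (e_law gam (nn j) * e_law gam (nn j)))
                + \sum_(m * l <= j <oo) (lam j)%:E)%E in
  (err <= bound)%E /\
  ((l = 1%N \/ (forall j k, (j < m)%N -> (k < l)%N -> lam (j * l + k)%N = lam (j * l)%N))
     -> err = bound).
Proof.
move=> hip _ mX _ _ lam_gt0 lam_noninc hu eig _ Z indep Zlaw conv _ _ Zb opt vor Zhat Xhat.
exact: quantized_karhunen_loeve_error.
Qed.
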